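(* For every instance of (weighted) Maximum Coverage with covering multiplicity $r$, the greedy algorithm (with arbitrary tie-breaking) outputs $k$ sets whose union has weight at least $\left(1-(1-1/r)^r\right)$ times the optimum weight.
   Context: An instance of weighted Maximum Coverage is $({U},\mathcal{R},k)$ with ${U}$ finite, $\mathcal{R}$ a collection of subsets of ${U}$, $k$ a positive integer, and weights $w:{U}\to\mathbb{R}_{\ge0}$, with $w(S)=\sum_{x\in S}w(x)$; the goal is to choose $k$ sets of $\mathcal{R}$ maximizing the weight of their union (the unweighted problem is the case $w\equiv1$). The greedy algorithm chooses $k$ sets sequentially, each new set maximizing the weight of the elements it covers that are not covered by previously chosen sets. The instance has covering multiplicity $r$ if for every $k$-tuple of sets $a_1,\dots,a_k\in\mathcal{R}$ there exists an optimal solution $(o_1,\dots,o_k)$, with union denoted $OPT$, such that each set $a_i\cap OPT$ ($1\le i\le k$) is contained in the union of some $r$ elements of $\{o_1,\dots,o_k\}$. *)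

From HB Require Import structures.
From mathcomp Require Import all_boot all_order all_algebra.
Set Implicit Arguments. Unset Strict Implicit. Unset Printing Implicit Defensive.
Import Order.TTheory GRing.Theory Num.Theory.
Local Open Scope ring_scope.

Section MaxCov.
Variables (F : realFieldType) (U : finType).

Definition weight (w : U -> F) (S : {set U}) : F := \sum_(x in S) w x.

Definition feasible (Rc : {set {set U}}) (k : nat) (o : 'I_k -> {set U}) : Prop :=
  forall i, o i \in Rc.

Definition sol_union (k : nat) (o : 'I_k -> {set U}) : {set U} :=
  \bigcup_(i < k) o i.

Definition optimal (w : U -> F) (Rc : {set {set U}}) (k : nat)
    (o : 'I_k -> {set U}) : Prop :=
  feasible Rc o /\
  forall o' : 'I_k -> {set U}, feasible Rc o' ->
    weight w (sol_union o') <= weight w (sol_union o).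

Definition covering_multiplicity (w : U -> F) (Rc : {set {set U}}) (k r : nat)
    : Prop :=
  forall a : 'I_k -> {set U}, feasible Rc a ->
    exists o : 'I_k -> {set U}, optimal w Rc o /\
      forall i : 'I_k, exists J : {set 'I_k},
        (#|J| <= r)%N /\ a i :&: sol_union o \subset \bigcup_(j in J) o j.

Definition covered_before (k : nat) (g : 'I_k -> {set U}) (i : 'I_k) : {set U} :=
  \bigcup_(j < k | (j < i)%N) g j.

(* g is a possible output of the greedy algorithm (arbitrary tie-breaking):
   each g_i is in Rc and maximizes the weight of newly covered elements. *)
Definition greedy_output (w : U -> F) (Rc : {set {set U}}) (k : nat)
    (g : 'I_k -> {set U}) : Prop :=
  forall i : 'I_k, g i \in Rc /\
    forall S, S \in Rc ->
      weight w (S :\: covered_before g i) <= weight w (g i :\: covered_before g i).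

End MaxCov.

Set Warnings "-notation-overridden,-ambiguous-paths,-notation-incompatible-prefix".
From HB Require Import structures.
From mathcomp Require Import all_boot all_order all_algebra.
From mathcomp Require Import ring lra zify.
Import Order.TTheory GRing.Theory Num.Theory.
Local Open Scope ring_scope.
Set Implicit Arguments. Unset Strict Implicit. Unset Printing Implicit Defensive.

(* Fix an optimal solution o whose sets meet each greedy set g_i inside the
   union of at most r of them (indices J_i).  Split OPT = \bigcup_j o_j into
   disjoint "bins" p_j \subset o_j, assigning every element first covered by
   g_i to a bin of J_i.  Let v_j(n) be the weight of p_j left uncovered after
   n greedy steps and d_n the gain of step n.  Greedy maximality gives
   v_j(n) <= d_n, step n only decreases the bins of J_n, and the total decrease
   is at most d_n.  We call such data a "depletion process" and show
   abstractly that its budgets sum to at least (1 - (1 - 1/r)^r) times the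
   initial total value:
   - with r * L steps and at most L * r bins, every round of L steps removes a
     1/r-fraction of what is still unpaid (depletion_round, depletion_game);
   - the general case (K steps, K bins) reduces to this one by splitting each
     step into r sub-steps and each bin into r copies (depletion_bound).
   The greedy data form a depletion process (greedy_bound); theorem4p1 then
   compares the optimal solution given by the multiplicity hypothesis with o. *)

Lemma card_between (T : finType) (A B : {set T}) (m : nat) :
  B \subset A -> (#|B| <= m <= #|A|)%N ->
  exists R : {set T}, [/\ B \subset R, R \subset A & #|R| = m].
Proof.
move=> sBA; elim: m => [|m IH] /andP [Bm mA].
  move: Bm; rewrite leqn0 cards_eq0 => /eqP ->.
  by exists set0; rewrite !sub0set cards0.
have [card_B | Bm'] := eqVneq #|B| m.+1; first by exists B.
have [R [sBR sRA cR]] : exists R : {set T}, [/\ B \subset R, R \subset A & #|R| = m].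
  by apply: IH; rewrite (ltnW mA) andbT -ltnS ltn_neqAle Bm' Bm.
have : (0 < #|A :\: R|)%N by rewrite cardsDS // cR subn_gt0.
case/card_gt0P => x /setDP [xA xR].
exists (x |: R); split.
- exact: subset_trans sBR (subsetU1 x R).
- by rewrite subUset sub1set xA.
- by rewrite cardsU1 xR cR.
Qed.

Section Weights.
Variables (F : realFieldType) (U : finType) (w : U -> F).
Hypothesis w_ge0 : forall x, 0 <= w x.

Lemma weight_ge0 S : 0 <= weight w S.
Proof. exact: sumr_ge0. Qed.

Lemma weight_split (S A : {set U}) :
  weight w S = weight w (S :&: A) + weight w (S :\: A).
Proof. by rewrite /weight (big_setID A). Qed.

Lemma weight_mono (S1 S2 : {set U}) : S1 \subset S2 -> weight w S1 <= weight w S2.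
Proof.
by move=> sS12; rewrite (weight_split S2 S1) (setIidPr sS12) lerDl weight_ge0.
Qed.

Lemma weight_partition (I : finType) (f : U -> I) (S : {set U}) :
  \sum_i weight w [set x in S | f x == i] = weight w S.
Proof.
rewrite /weight (partition_big f xpredT) //=.
by apply: eq_bigr => i _; apply: eq_bigl => x; rewrite inE.
Qed.

End Weights.

Record depletion (F : realFieldType) (B : finType) (N r : nat)
    (d : nat -> F) (v : B -> nat -> F) (T : nat -> {set B}) : Prop := Depletion {
  touched_small : forall t, (t < N)%N -> (#|T t| <= r)%N;
  value_le_budget : forall t j, (t < N)%N -> v j t <= d t;
  untouched_const : forall t j, (t < N)%N -> j \notin T t -> v j t.+1 = v j t;
  value_nonincr : forall t j, (t < N)%N -> v j t.+1 <= v j t;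
  decrease_le_budget : forall t, (t < N)%N -> \sum_j (v j t - v j t.+1) <= d t
}.

Section DepletionGame.
Variables (F : realFieldType) (B : finType) (r L : nat).
Variables (d : nat -> F) (v : B -> nat -> F) (T : nat -> {set B}).
Hypothesis r_gt0 : (0 < r)%N.
Hypothesis Dv : depletion (r * L) r d v T.

(* Budgets are nonnegative, since the values can only decrease. *)
Lemma budget_ge0 t : (t < r * L)%N -> 0 <= d t.
Proof.
move=> ht; apply: le_trans (decrease_le_budget Dv ht).
by apply: sumr_ge0 => j _; rewrite subr_ge0 (value_nonincr Dv).
Qed.

(* Over n steps from s, the budget pays for a 1/r-fraction of the value of
   any n * r bins: at each step, put aside r bins containing all touched ones
   (each worth at most d s) and continue with the untouched rest. *)
Lemma depletion_round n s (A : {set B}) :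
  (s + n <= r * L)%N -> (#|A| <= n * r)%N ->
  r%:R^-1 * \sum_(j in A) v j s <= \sum_(s <= t < s + n) d t.
Proof.
elim: n s A => [|n IH] s A hsn hA.
  move: hA; rewrite mul0n leqn0 cards_eq0 => /eqP ->.
  by rewrite big_set0 mulr0 addn0 big_geq.
have hs : (s < r * L)%N by lia.
rewrite big_ltn; last by rewrite addnS ltnS leq_addr.
rewrite -addSnnS.
have hATr : (#|A :&: T s| <= r)%N.
  exact: leq_trans (subset_leq_card (subsetIr _ _)) (touched_small Dv hs).
have [R [sATR sRA cR]] : exists R : {set B},
    [/\ A :&: T s \subset R, R \subset A & #|R| = minn #|A| r].
  apply: card_between; first exact: subsetIl.
  by rewrite geq_minl leq_min hATr subset_leq_card // subsetIl.
rewrite (big_setID R) /= (setIidPr sRA) mulrDr.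
apply: lerD.
- have hR : \sum_(j in R) v j s <= r%:R * d s.
    apply: le_trans (_ : #|R|%:R * d s <= _).
      rewrite -sum1_card natr_sum mulr_suml.
      by apply: ler_sum => j _; rewrite mul1r (value_le_budget Dv).
    apply: ler_wpM2r; last by rewrite ler_nat cR geq_minr.
    exact: budget_ge0.
  by rewrite ler_pdivrMl ?ltr0n.
- have -> : \sum_(j in A :\: R) v j s = \sum_(j in A :\: R) v j s.+1.
    apply: eq_bigr => j /setDP [jA jR].
    rewrite (untouched_const Dv) //; apply: contra jR => jT.
    by apply: (subsetP sATR); rewrite inE jA jT.
  apply: IH; first lia.
  rewrite cardsDS // cR; lia.
Qed.

Lemma depletion_telescope n : (n <= r * L)%N ->
  \sum_j v j 0 - \sum_j v j n <= \sum_(0 <= t < n) d t.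
Proof.
elim: n => [|n IH] hn; first by rewrite subrr big_geq.
rewrite big_nat_recr //=.
have := decrease_le_budget Dv hn; rewrite sumrB.
have := IH (ltnW hn); lra.
Qed.

(* If there are at most L * r bins, then after the m-th round of L steps the
   value not yet paid for by the budget is at most (1 - 1/r)^m times the
   initial total value; for m = r this is the bound of the game. *)
Lemma depletion_game : (#|B| <= L * r)%N ->
  (1 - (1 - r%:R^-1) ^+ r) * \sum_j v j 0 <= \sum_(0 <= t < r * L) d t.
Proof.
move=> hB.
set W := \sum_j v j 0; set q := 1 - r%:R^-1.
have q_ge0 : 0 <= q by rewrite subr_ge0 invf_le1 ?ler1n ?ltr0n.
have rinv_ge0 : 0 <= r%:R^-1 :> F by rewrite invr_ge0 ler0n.
suff rounds m : (m <= r)%N -> W - \sum_(0 <= t < m * L) d t <= q ^+ m * W.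
  by have := rounds r (leqnn r); rewrite mulrBl mul1r; lra.
elim: m => [|m IH] hm; first by rewrite mul0n big_geq // expr0 mul1r subr0.
have hmL : (m * L + L <= r * L)%N by rewrite addnC -mulSn leq_mul2r hm orbT.
have round : r%:R^-1 * \sum_j v j (m * L) <= \sum_(m * L <= t < m * L + L) d t.
  have := depletion_round (A := [set: B]) hmL; rewrite cardsT => /(_ hB).
  by under eq_bigl do rewrite in_setT.
have tele := depletion_telescope (leq_trans (leq_addr _ _) hmL).
rewrite -/W in tele.
rewrite mulSn addnC (@big_cat_nat _ _ _ (m * L)) //= ?leq_addr // exprS.
have {}IH := IH (ltnW hm).
set X := \sum_(0 <= t < m * L) d t in IH tele *.
set Y := \sum_(m * L <= t < m * L + L) d t in round *.
set S := \sum_j v j (m * L) in tele round.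
have paid : r%:R^-1 * (W - X) <= r%:R^-1 * S by apply: ler_wpM2l => //; lra.
have shrink : (W - X) - r%:R^-1 * (W - X) <= q * (q ^+ m * W).
  have -> : (W - X) - r%:R^-1 * (W - X) = q * (W - X) by rewrite /q; ring.
  by rewrite ler_wpM2l.
rewrite -mulrA.
move: (r%:R^-1 * (W - X)) (q * (q ^+ m * W)) paid shrink => P Z.
lra.
Qed.

End DepletionGame.

(* Any depletion process with K steps and at most K bins is refined into one
   with r * K steps over the bins B * 'I_r: step n becomes the sub-steps
   n * r + c (c < r), and sub-step n * r + c performs step n on copy c only.
   Copy c of bin j carries the value v j / r, taken at the number of steps
   already performed on copy c. *)
Section StepSplitting.
Variables (F : realFieldType) (B : finType) (K r : nat).
Variables (d : nat -> F) (v : B -> nat -> F) (T : nat -> {set B}).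
Hypothesis r_gt0 : (0 < r)%N.
Hypothesis Dv : depletion K r d v T.

(* number of sub-steps before t that updated copy c *)
Let updates t (c : 'I_r) : nat := (t %/ r + (c < t %% r))%N.
(* the copy updated at sub-step t *)
Let copy t : 'I_r := Ordinal (ltn_pmod t r_gt0).

Let split_value (p : B * 'I_r) t := v p.1 (updates t p.2) / r%:R.
Let split_budget t := d (t %/ r)%N / r%:R.
Let split_touched t := [set p : B * 'I_r | (p.1 \in T (t %/ r)%N) && (p.2 == copy t)].

Lemma updates_succ t c : updates t.+1 c = (updates t c + (copy t == c))%N.
Proof.
rewrite /updates modnS divnS // -val_eqE /=.
have := ltn_pmod t r_gt0; case: ifP => [dvd_r | _] ltr; last by lia.
have last_copy : (t %% r).+1 = r.
  apply/eqP; rewrite eqn_leq ltr dvdn_leq //.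
  by rewrite -(dvdn_addr _ (dvdn_mull (t %/ r) (dvdnn r))) addnS -divn_eq.
have := ltn_ord c; lia.
Qed.

Let step_lt t : (t < r * K)%N -> (t %/ r < K)%N.
Proof. by rewrite ltn_divLR // mulnC. Qed.

Let ler_divr (a b : F) : a <= b -> a / r%:R <= b / r%:R.
Proof. by move=> le_ab; rewrite ler_wpM2r // invr_ge0 ler0n. Qed.

Let updates_copy t : updates t (copy t) = (t %/ r)%N.
Proof. by rewrite /updates ltnn addn0. Qed.

Let updates_other t c : copy t != c -> updates t.+1 c = updates t c.
Proof. by rewrite updates_succ => /negbTE ->; rewrite addn0. Qed.

Lemma split_depletion : depletion (r * K) r split_budget split_value split_touched.
Proof.
split.
- move=> t /step_lt ht; apply: leq_trans (touched_small Dv ht).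
  have inj : injective (fun j : B => (j, copy t)) by move=> ? ? [].
  rewrite -(card_imset _ inj).
  apply/subset_leq_card/subsetP => -[j c]; rewrite inE /= => /andP [jT /eqP <-].
  exact: imset_f.
- move=> t [j c] /step_lt ht; apply: ler_divr; rewrite /updates /=.
  case: (c < t %% r)%N; rewrite ?addn0 ?addn1; last exact: (value_le_budget Dv).
  exact: le_trans (value_nonincr Dv _ ht) (value_le_budget Dv _ ht).
- move=> t [j c] /step_lt ht; rewrite inE /= negb_and /split_value /=.
  have [<- | ne_c] := eqVneq (copy t) c; last by rewrite updates_other.
  rewrite orbF updates_succ eqxx updates_copy addn1 => untouched.
  by rewrite (untouched_const Dv).
- move=> t [j c] /step_lt ht; rewrite /split_value /=.
  have [<- | ne_c] := eqVneq (copy t) c; last by rewrite updates_other.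
  by rewrite updates_succ eqxx updates_copy addn1 ler_divr // (value_nonincr Dv).
- move=> t /step_lt ht.
  pose decr j c := split_value (j, c) t - split_value (j, c) t.+1.
  rewrite -(pair_big xpredT xpredT decr) /=.
  have per_bin j :
      \sum_c decr j c = (v j (t %/ r)%N - v j (t %/ r)%N.+1) / r%:R.
    rewrite (bigD1 (copy t)) //= big1 ?addr0 => [|c ne_c]; last first.
      by rewrite /decr /split_value /= updates_other 1?eq_sym // subrr.
    by rewrite /decr /split_value /= updates_succ eqxx updates_copy addn1 mulrBl.
  rewrite (eq_bigr _ (fun j _ => per_bin j)) -mulr_suml.
  exact/ler_divr/(decrease_le_budget Dv).
Qed.

Let div_mulrn (x : F) : x / r%:R *+ r = x.
Proof. by rewrite -[LHS]mulr_natr divfK // pnatr_eq0 -lt0n. Qed.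

Let split_budget_sum M :
  \sum_(0 <= t < r * M) split_budget t = \sum_(0 <= n < M) d n.
Proof.
elim: M => [|M IH]; first by rewrite muln0 !big_geq.
rewrite mulnS addnC (@big_cat_nat _ _ _ (r * M)%N) //= ?leq_addr // IH.
rewrite big_nat_recr //=; congr (_ + _).
rewrite -{1}(add0n (r * M)%N) big_addn addKn.
rewrite (eq_big_nat _ _ (F2 := fun _ => d M / r%:R)) => [|t /andP [_ ltr]].
  by rewrite sumr_const_nat subn0 div_mulrn.
by rewrite /split_budget addnC mulnC divnMDl // divn_small // addn0.
Qed.

Lemma split_value0 j : \sum_(c : 'I_r) split_value (j, c) 0 = v j 0.
Proof.
rewrite (eq_bigr (fun _ => v j 0 / r%:R)) => [|c _]; last first.
  by rewrite /split_value /updates div0n mod0n.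
by rewrite sumr_const card_ord div_mulrn.
Qed.

Lemma depletion_bound : (#|B| <= K)%N ->
  (1 - (1 - r%:R^-1) ^+ r) * \sum_j v j 0 <= \sum_(0 <= n < K) d n.
Proof.
move=> card_B.
have card_split : (#|{: B * 'I_r}| <= K * r)%N.
  by rewrite card_prod card_ord leq_mul2r card_B orbT.
have := depletion_game r_gt0 split_depletion card_split.
rewrite split_budget_sum.
rewrite -(pair_big xpredT xpredT (fun j c => split_value (j, c) 0)) /=.
by under eq_bigr do rewrite split_value0.
Qed.
End StepSplitting.

Section GreedyAnalysis.
Variables (F : realFieldType) (U : finType) (Rc : {set {set U}}) (k r : nat).
Variables (w : U -> F) (g o : 'I_k.+1 -> {set U}) (J : 'I_k.+1 -> {set 'I_k.+1}).
Hypothesis r_gt0 : (0 < r)%N.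
Hypothesis w_ge0 : forall x, 0 <= w x.
Hypothesis g_greedy : greedy_output w Rc g.
Hypothesis o_feasible : feasible Rc o.
Hypothesis J_small : forall i, (#|J i| <= r)%N.
Hypothesis J_cover : forall i, g i :&: sol_union o \subset \bigcup_(j in J i) o j.

Let OPT := sol_union o.

Let covered n := \bigcup_(i < k.+1 | (i < n)%N) g i.

Let covered0 : covered 0 = set0.
Proof. by apply/setP => x; rewrite inE; apply/bigcupP => -[i]. Qed.

Let covered_mono n : covered n \subset covered n.+1.
Proof.
apply/subsetP => x /bigcupP [i lt_in xi].
by apply/bigcupP; exists i => //; apply: ltnW.
Qed.

Let covered_all : covered k.+1 = sol_union g.
Proof. by apply: eq_bigl => i; rewrite ltn_ord. Qed.

Let covered_new n : (n < k.+1)%N ->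
  covered n.+1 :\: covered n = g (inord n) :\: covered n.
Proof.
move=> lt_nk; apply/setP => x; rewrite !inE; apply: andb_id2l => x_new.
apply/bigcupP/idP => [[i]|x_gn]; last by exists (inord n); rewrite ?inordK.
rewrite ltnS leq_eqVlt => /orP [/eqP i_n | lt_in] xi.
  by have -> : inord n = i by apply: val_inj; rewrite /= inordK // -i_n.
by case/negP: x_new; apply/bigcupP; exists i.
Qed.

Let first_cover_unique (i i' : 'I_k.+1) x :
  x \in g i :\: covered i -> x \in g i' :\: covered i' -> i = i'.
Proof.
move=> /setDP [xi x_newi] /setDP [xi' x_newi'].
apply: val_inj; case: (ltngtP i i') => // lt_ii'.
  by case/negP: x_newi'; apply/bigcupP; exists i.
by case/negP: x_newi; apply/bigcupP; exists i'.
Qed.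

(* The bin of x: a set of o containing x, taken among the J i when x is
   first covered by g i. *)
Let bin x : 'I_k.+1 :=
  odflt ord0 (if [pick i | x \in g i :\: covered i] is Some i
              then [pick j in J i | x \in o j] else [pick j | x \in o j]).

Let bin_spec x : x \in OPT ->
  x \in o (bin x) /\ forall i, x \in g i :\: covered i -> bin x \in J i.
Proof.
move=> x_opt; rewrite /bin; case: pickP => [i /= x_newi | no_new]; last first.
  split=> [|i x_newi]; last by have := no_new i; rewrite x_newi.
  case: pickP => [j //| no_o]; case/bigcupP: x_opt => j _ xj.
  by have := no_o j; rewrite xj.
have /bigcupP [j jJ xj] : x \in \bigcup_(j in J i) o j.
  by apply: (subsetP (J_cover i)); rewrite inE x_opt andbT; case/setDP: x_newi.
case: pickP => [j' /andP [j'J xj'] | no_j]; last by have := no_j j; rewrite jJ xj.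
by split=> // i' x_newi'; rewrite -(first_cover_unique x_newi x_newi').
Qed.

Let part j := [set x in OPT | bin x == j].
Let remaining j n := weight w (part j :\: covered n).
Let gain n := if (n < k.+1)%N then weight w (g (inord n) :\: covered n) else 0.
Let touched n := if (n < k.+1)%N then J (inord n) else set0.

(* Greedy choice: the gain at step n dominates the remaining weight of o j. *)
Let remaining_le_gain n j : (n < k.+1)%N -> remaining j n <= gain n.
Proof.
move=> lt_nk; rewrite /remaining /gain lt_nk.
have part_o : part j :\: covered n \subset o j :\: covered n.
  apply/setSD/subsetP => x; rewrite inE => /andP [x_opt /eqP <-].
  exact: (bin_spec x_opt).1.
apply: le_trans (weight_mono w_ge0 part_o) _.
by have := (g_greedy (inord n)).2 _ (o_feasible j); rewrite /covered_before inordK.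
Qed.

(* Step n only covers elements of the bins in J n. *)
Let remaining_untouched n j : (n < k.+1)%N -> j \notin touched n ->
  remaining j n.+1 = remaining j n.
Proof.
rewrite /touched => lt_nk; rewrite lt_nk => jJ; congr (weight w _).
apply/eqP; rewrite eqEsubset setDS //=; apply/subsetP => x /setDP [x_part x_old].
rewrite in_setD x_part andbT; apply/negP => x_cov; case/negP: jJ.
have x_new : x \in g (inord n) :\: covered (inord n : 'I_k.+1).
  by rewrite inordK // -covered_new // inE x_cov x_old.
move: x_part; rewrite inE => /andP [x_opt /eqP <-].
exact: (bin_spec x_opt).2.
Qed.

(* What the bins lose at step n is part of what g n newly covers. *)
Let remaining_decrease n : (n < k.+1)%N ->
  \sum_j (remaining j n - remaining j n.+1) <= gain n.
Proof.
move=> lt_nk; set fresh := covered n.+1 :\: covered n.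
have drop j : remaining j n - remaining j n.+1 =
    weight w [set x in OPT :&: fresh | bin x == j].
  rewrite /remaining (weight_split w _ (covered n.+1)) setDDl.
  rewrite (setUidPr (covered_mono n)) addrK; congr (weight w _).
  apply/setP => x; rewrite !inE.
  by case: (x \in OPT); case: (x \in covered n); case: (x \in covered n.+1);
    rewrite /= ?andbT ?andbF.
rewrite (eq_bigr _ (fun j _ => drop j)) weight_partition /gain lt_nk.
by apply: weight_mono => //; rewrite -covered_new // subsetIr.
Qed.

Let greedy_depletion : depletion k.+1 r gain remaining touched.
Proof.
split=> [t lt_tk | | | t j _ |].
- by rewrite /touched lt_tk.
- exact: remaining_le_gain.
- exact: remaining_untouched.
- exact/weight_mono/setDS/covered_mono.
- exact: remaining_decrease.
Qed.

Let covered_weight n : (n <= k.+1)%N ->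
  weight w (covered n) = \sum_(0 <= m < n) gain m.
Proof.
elim: n => [|n IH] le_nk; first by rewrite covered0 big_geq // /weight big_set0.
rewrite big_nat_recr //= -IH ?(ltnW le_nk) // (weight_split w _ (covered n)).
by rewrite (setIidPr (covered_mono n)) covered_new // /gain le_nk.
Qed.

Let remaining_total : \sum_j remaining j 0 = weight w OPT.
Proof.
rewrite -(weight_partition w bin OPT); apply: eq_bigr => j _.
by rewrite /remaining covered0 setD0.
Qed.

Lemma greedy_bound :
  (1 - (1 - r%:R^-1) ^+ r) * weight w (sol_union o) <= weight w (sol_union g).
Proof.
have := depletion_bound r_gt0 greedy_depletion; rewrite card_ord leqnn.
by rewrite remaining_total -covered_weight // covered_all; apply.
Qed.
End GreedyAnalysis.

Theorem theorem4p1 (F : realFieldType) (U : finType) (Rc : {set {set U}})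
    (k r : nat) (w : U -> F) :
  (0 < k)%N -> (0 < r)%N ->
  (forall x, 0 <= w x) ->
  covering_multiplicity w Rc k r ->
  forall g : 'I_k -> {set U}, greedy_output w Rc g ->
  forall o : 'I_k -> {set U}, optimal w Rc o ->
    (1 - (1 - r%:R^-1) ^+ r) * weight w (sol_union o)
      <= weight w (sol_union g).
Proof.
case: k => [//|k] _ r_gt0 w_ge0 multiplicity g g_greedy o o_opt.
have g_feasible : feasible Rc g by move=> i; case: (g_greedy i).
have [o' [o'_opt o'_cover]] := multiplicity g g_feasible.
have [J J_spec] := fin_all_exists o'_cover.
have ratio_ge0 : 0 <= 1 - (1 - r%:R^-1) ^+ r :> F.
  rewrite subr_ge0 exprn_ile1 // ?subr_ge0 ?gerBl ?invr_ge0 ?ler0n //.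
  by rewrite invf_le1 ?ler1n ?ltr0n.
apply: le_trans (greedy_bound r_gt0 w_ge0 g_greedy o'_opt.1
  (fun i => (J_spec i).1) (fun i => (J_spec i).2)).
by rewrite ler_wpM2l //; apply: o'_opt.2; case: o_opt.
Qed.
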